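(* Let $D$ be a pv-monoid (idempotent, with symmetric valuation function), $P$ a nonempty finite set of ports, $I,J$ nonempty finite index sets and $m_i$ ($i\in I$), $m'_j$ ($j\in J$) full monomials over $P$. Then \[\Big(\sum_{i\in I}m_i\Big)\otimes\Big(\sum_{j\in J}m'_j\Big)\equiv\begin{cases}\sum_{i\in I}m_i & \text{if } \sum_{i\in I}m_i\equiv\sum_{j\in J}m'_j,\\ 0&\text{otherwise.}\end{cases}\]
   Context: A pv-monoid $(D,\oplus,\mathrm{val},\otimes,0,1)$ consists of a commutative monoid $(D,\oplus,0)$, a map $\mathrm{val}$ from nonempty finite sequences over $D$ to $D$ with $\mathrm{val}(d)=d$ and $\mathrm{val}(d_1,\dots,d_n)=0$ whenever some $d_i=0$, a binary operation $\otimes$ and an element $1$ with $\mathrm{val}(1,\dots,1)=1$, $0\otimes d=d\otimes0=0$, $1\otimes d=d\otimes1=d$. Standing assumption: $D$ is idempotent and $\mathrm{val}$ is symmetric. $I(P)$ is the set of nonempty subsets of $P$, $C(P)$ the set of nonempty subsets of $I(P)$. PIL formulas: $\phi::=true\mid p\mid\overline{\phi}\mid\phi\vee\phi$ ($p\in P$), $\alpha\models_i p$ iff $p\in\alpha$, negation and disjunction as usual, $\wedge$ via De Morgan. A full monomial is a PIL formula $\bigwedge_{p\in P_+}p\wedge\bigwedge_{p\in P_-}\overline p$ with $P_+\cup P_-=P$, $P_+\cap P_-=\emptyset$. PCL formulas: $f::=true\mid\phi\mid\neg f\mid f\sqcup f\mid f+f$; $\gamma\models\phi$ iff every $\alpha\in\gamma$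 satisfies $\phi$; $\neg,\sqcup$ are complement and union; $\gamma\models f_1+f_2$ iff $\gamma=\gamma_1\cup\gamma_2$ with $\gamma_1,\gamma_2\in C(P)$, $\gamma_1\models f_1,\gamma_2\models f_2$. $\sum_{j\in J}m_j$ is the $+$-combination. Weighted formulas are built from constants $d\in D$ and PCL formulas by $\oplus,\otimes$ (and further operators), with semantics $\|\cdot\|:C(P)\to D$: $\|d\|(\gamma)=d$, $\|f\|(\gamma)=1$ if $\gamma\models f$ and $0$ otherwise, $\oplus,\otimes$ pointwise. $\equiv$ means equality of semantics on all of $C(P)$. *)

From Stdlib Require List Permutation.
From mathcomp Require Import all_boot.
Set Implicit Arguments. Unset Strict Implicit. Unset Printing Implicit Defensive.

(* val is a map on sequences; the axioms only constrain nonempty ones. *)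
Record pvMonoid := PvMonoid {
  pv_car :> Type;
  pv_add : pv_car -> pv_car -> pv_car;
  pv_val : seq pv_car -> pv_car;
  pv_mul : pv_car -> pv_car -> pv_car;
  pv_zero : pv_car;
  pv_one : pv_car;
  pv_addA : forall x y z, pv_add x (pv_add y z) = pv_add (pv_add x y) z;
  pv_addC : forall x y, pv_add x y = pv_add y x;
  pv_add0 : forall x, pv_add pv_zero x = x;
  pv_val1 : forall d, pv_val [:: d] = d;
  pv_val0 : forall s, s <> [::] -> List.In pv_zero s -> pv_val s = pv_zero;
  pv_valone : forall n, pv_val (nseq n.+1 pv_one) = pv_one;
  pv_mul0l : forall d, pv_mul pv_zero d = pv_zero;
  pv_mul0r : forall d, pv_mul d pv_zero = pv_zero;
  pv_mul1l : forall d, pv_mul pv_one d = d;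
  pv_mul1r : forall d, pv_mul d pv_one = d;
  pv_idem : forall d, pv_add d d = d;
  pv_valsym : forall s t, s <> [::] -> Permutation.Permutation s t -> pv_val s = pv_val t
}.

Section Logic.
Variable P : finType.

(* I(P): interactions (nonempty subsets of P); C(P): configurations *)
Definition validI (a : {set P}) : bool := a != set0.
Definition validC (g : {set {set P}}) : bool :=
  (g != set0) && [forall a in g, validI a].

Inductive pil :=
| PTrue
| PVar of P
| PNeg of pil
| POr of pil & pil.

Fixpoint pil_sat (a : {set P}) (phi : pil) : bool :=
  match phi with
  | PTrue => true
  | PVar p => p \in a
  | PNeg f => ~~ pil_sat a f
  | POr f g => pil_sat a f || pil_sat a g
  end.

Definition PAnd (f g : pil) : pil := PNeg (POr (PNeg f) (PNeg g)).

Definition pil_lit (Pp : {set P}) (p : P) : pil :=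
  if p \in Pp then PVar p else PNeg (PVar p).
Definition full_monomial (Pp : {set P}) : pil :=
  foldr PAnd PTrue [seq pil_lit Pp p | p <- enum P].

Inductive pcl :=
| CTrue
| CPil of pil
| CNeg of pcl
| COr of pcl & pcl
| CPlus of pcl & pcl.

Fixpoint pcl_sat (g : {set {set P}}) (f : pcl) : bool :=
  match f with
  | CTrue => true
  | CPil phi => [forall a in g, pil_sat a phi]
  | CNeg f1 => ~~ pcl_sat g f1
  | COr f1 f2 => pcl_sat g f1 || pcl_sat g f2
  | CPlus f1 f2 => [exists g1 : {set {set P}}, exists g2 : {set {set P}},
       [&& validC g1, validC g2, g == g1 :|: g2, pcl_sat g1 f1 & pcl_sat g2 f2]]
  end.

Fixpoint pcl_sum (s : seq pcl) : pcl :=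
  match s with
  | [::] => CTrue (* never used: index sets are nonempty *)
  | [:: x] => x
  | x :: s' => CPlus x (pcl_sum s')
  end.

Variable D : pvMonoid.

Inductive wform :=
| WConst of pv_car D
| WPcl of pcl
| WAdd of wform & wform
| WMul of wform & wform.

Fixpoint wsem (w : wform) (g : {set {set P}}) : pv_car D :=
  match w with
  | WConst d => d
  | WPcl f => if pcl_sat g f then pv_one D else pv_zero D
  | WAdd w1 w2 => pv_add (wsem w1 g) (wsem w2 g)
  | WMul w1 w2 => pv_mul (wsem w1 g) (wsem w2 g)
  end.

Definition wequiv (w1 w2 : wform) : Prop :=
  forall g, validC g -> wsem w1 g = wsem w2 g.

End Logic.

Definition sum_monomials (P I : finType) (m : I -> {set P}) : pcl P :=
  pcl_sum [seq CPil (full_monomial (m i)) | i <- enum I].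

From mathcomp Require Import all_boot.

Set Implicit Arguments.
Unset Strict Implicit.
Unset Printing Implicit Defensive.

(* A full monomial is satisfied by exactly one interaction, so a
   +-combination of full monomials is satisfied by at most one configuration.
   Two such weighted formulas are therefore either equivalent or have no
   common model, and in the latter case their product vanishes everywhere. *)

Section SatOnly.
Variable P : finType.

Definition sat_only (f : pcl P) (c : {set {set P}}) : Prop :=
  forall g, validC g -> pcl_sat g f -> g = c.

Lemma pil_sat_full_monomial (a Pp : {set P}) :
  pil_sat a (full_monomial Pp) = (a == Pp).
Proof.
have sat_lits s : pil_sat a (foldr (@PAnd P) (PTrue P) [seq pil_lit Pp p | p <- s])
    = all (fun p => (p \in a) == (p \in Pp)) s.
  elim: s => [|x s IHs] //=; rewrite negb_or !negbK IHs /pil_lit.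
  by case: (x \in Pp) => /=; case: (x \in a).
rewrite /full_monomial sat_lits; apply/allP/eqP => [eq_a_Pp|-> //].
by apply/setP => x; apply/eqP/eq_a_Pp; rewrite mem_enum.
Qed.

Lemma sat_only_full_monomial (Pp : {set P}) :
  sat_only (CPil (full_monomial Pp)) [set Pp].
Proof.
move=> g /andP [/set0Pn [b gb] _] /forallP /= sat_g.
have in_g_Pp a : a \in g -> a = Pp.
  by move=> ga; have := sat_g a; rewrite ga pil_sat_full_monomial => /eqP.
apply/setP => a; rewrite inE; apply/idP/eqP => [/in_g_Pp // | ->].
by rewrite -(in_g_Pp b gb).
Qed.

Lemma sat_only_CPlus (f1 f2 : pcl P) (c1 c2 : {set {set P}}) :
  sat_only f1 c1 -> sat_only f2 c2 -> sat_only (CPlus f1 f2) (c1 :|: c2).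
Proof.
move=> only1 only2 g _ /existsP [g1 /existsP [g2 /and5P [v1 v2 /eqP -> s1 s2]]].
by rewrite (only1 g1 v1 s1) (only2 g2 v2 s2).
Qed.

Lemma sat_only_pcl_sum (T : Type) (F : T -> pcl P) (c : T -> {set {set P}})
    (x : T) (s : seq T) :
  (forall y, sat_only (F y) (c y)) ->
  sat_only (pcl_sum (map F (x :: s))) (\bigcup_(y <- x :: s) c y).
Proof.
move=> onlyF; elim: s x => [|y s IHs] x.
  by rewrite big_seq1; exact: onlyF.
by rewrite big_cons; exact: sat_only_CPlus (onlyF x) (IHs y).
Qed.

Lemma sat_only_sum_monomials (I : finType) (m : I -> {set P}) :
  0 < #|I| -> sat_only (sum_monomials m) (\bigcup_(i <- enum I) [set m i]).
Proof.
rewrite cardE /sum_monomials; case: (enum I) => [|i s] // _.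
by apply: sat_only_pcl_sum => j; apply: sat_only_full_monomial.
Qed.

Lemma sat_only_common_model (f1 f2 : pcl P) (c1 c2 g : {set {set P}}) :
  sat_only f1 c1 -> sat_only f2 c2 -> validC g ->
  pcl_sat g f1 -> pcl_sat g f2 ->
  forall h, validC h -> pcl_sat h f1 = pcl_sat h f2.
Proof.
move=> only1 only2 vg s1 s2 h vh.
apply/idP/idP => [/(only1 h vh) | /(only2 h vh)] eq_h.
  by rewrite eq_h -(only1 g vg s1).
by rewrite eq_h -(only2 g vg s2).
Qed.

End SatOnly.

Section WeightedPcl.
Variables (P : finType) (D : pvMonoid).

Lemma wsem_WMul_WPcl (f1 f2 : pcl P) g :
  wsem (WMul (WPcl D f1) (WPcl D f2)) g =
  if pcl_sat g f1 && pcl_sat g f2 then pv_one D else pv_zero D.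
Proof.
by rewrite /=; case: (pcl_sat g f1); rewrite ?pv_mul1l ?pv_mul0l.
Qed.

Lemma wequiv_WMul_WPcl_self (f1 f2 : pcl P) :
  wequiv (WPcl D f1) (WPcl D f2) ->
  wequiv (WMul (WPcl D f1) (WPcl D f2)) (WPcl D f1).
Proof.
move=> eq12 g vg; have /= eq12g := eq12 g vg; rewrite /= -eq12g.
by case: (pcl_sat g f1); rewrite ?pv_mul1l ?pv_mul0l.
Qed.

Lemma wequiv_WPcl (f1 f2 : pcl P) :
  (forall g, validC g -> pcl_sat g f1 = pcl_sat g f2) ->
  wequiv (WPcl D f1) (WPcl D f2).
Proof. by move=> eq12 g vg /=; rewrite eq12. Qed.

Lemma wequiv_WMul_WPcl_sat_only (f1 f2 : pcl P) (c1 c2 : {set {set P}}) :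
  sat_only f1 c1 -> sat_only f2 c2 -> ~ wequiv (WPcl D f1) (WPcl D f2) ->
  wequiv (WMul (WPcl D f1) (WPcl D f2)) (WConst P (pv_zero D)).
Proof.
move=> only1 only2 neq12 g vg; rewrite wsem_WMul_WPcl.
case: ifP => [/andP [s1 s2] | //]; exfalso.
exact/neq12/wequiv_WPcl/(sat_only_common_model only1 only2 vg s1 s2).
Qed.

End WeightedPcl.

Theorem mainTheorem12 (D : pvMonoid) (P : finType) (HP : 0 < #|P|)
  (I J : finType) (HI : 0 < #|I|) (HJ : 0 < #|J|)
  (m : I -> {set P}) (m' : J -> {set P}) :
  let S1 := WPcl D (sum_monomials m) in
  let S2 := WPcl D (sum_monomials m') in
  (wequiv S1 S2 -> wequiv (WMul S1 S2) S1) /\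
  (~ wequiv S1 S2 -> wequiv (WMul S1 S2) (WConst P (pv_zero D))).
Proof.
move=> S1 S2; rewrite {}/S1 {}/S2.
split; first exact: wequiv_WMul_WPcl_self.
exact: wequiv_WMul_WPcl_sat_only (sat_only_sum_monomials (m := m) HI)
                                 (sat_only_sum_monomials (m := m') HJ).
Qed.
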